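(* Let $\mathbf{E}\subseteq\mathbf{A}\in\mathsf{NA}$ (with $\mathbf{E}$ a subalgebra of $\mathbf{A}$), where: $\mathbf{E}$ is finite and symmetric, $1'$ is an atom of $\mathbf{E}$, and $\mathbf{E}$ has $p>3$ atoms; $\mathbf{E}$ has no 1-cycles, i.e., $u;u\cdot u=0$ for every atom $u\le 0'$ of $\mathbf{E}$; $\mathbf{A}$ is finite and symmetric, $1'$ is an atom of $\mathbf{A}$, and some diversity atom of $\mathbf{E}$ is the join of at least $p^{p-1}$ atoms of $\mathbf{A}$. Then (i) $\mathbf{A}\notin\mathbf{S}\,\mathsf{Ra}\,\mathsf{CA}_{p+1}$; (ii) $\mathbf{Ca}(B_3(\mathbf{A}))\notin\mathbf{S}\,\mathsf{Nr}_3\mathsf{CA}_{p+1}$.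
   Context: $\mathsf{NA}$ is the class of non-associative relation algebras (Tarski's relation algebra axioms without associativity of relative product $;$); $1'$ is the identity element, $0'$ its Boolean complement; symmetric means $x^{\smile}=x$ for all $x$; a diversity atom is an atom below $0'$. Basic matrices: for an atomic $\mathbf{A}\in\mathsf{NA}$ and $k<\omega$, $B_k(\mathbf{A})$ is the set of maps $\mu:k\times k\to At(\mathbf{A})$ with $\mu_{i,i}\le1'$, $\mu_{i,j}^{\smile}=\mu_{j,i}$ and $\mu_{i,l};\mu_{l,j}\ge\mu_{i,j}$ for all $i,j,l<k$. For $\mathcal{M}\subseteq B_k(\mathbf{A})$, $\mathbf{Ca}(\mathcal{M})$ is the algebra of all subsets of $\mathcal{M}$ with set Boolean operations, cylindrifications $c_iX=\{\mu\in\mathcal{M}:\exists\mu'\in X$ with $\mu_{l,m}=\mu'_{l,m}$ whenever $l,m\ne i\}$ and diagonal elements $d_{ij}=\{\mu\in\mathcal{M}:\mu_{i,j}\le1'\}$, for $i,j<k$. Cylindric algebras: $\mathsf{CA}_m$ is the class of $m$-dimensional cylindric algebras (Henkin–Monk–Tarski); $s^i_jx=c_i(d_{ij}\cdot x)$ for $i\ne j$. For $\mathbf{D}\in\mathsf{CA}_m$ and $n\le m$, $\mathsf{Nr}_n\mathbf{D}$ (neat $n$-reduct) is the algebra of all $x$ with $c_ix=x$ for $n\le i<m$, with the Boolean operations and $c_i,d_{ij}$ for $i,j<n$. For $\mathbf{D}\in\mathsf{CA}_m$ with $m\ge3$, $\mathbf{Ra}(\mathbf{D})$ has universe $\{x:c_ix=x$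 for $2\le i<m\}$, the Boolean operations of $\mathbf{D}$, $1'=d_{01}$, $x^{\smile}=s^2_0s^0_1s^1_2x$, $x;y=c_2(s^1_2x\cdot s^0_2y)$. $\mathsf{Ra}\,\mathsf{CA}_m$ is the class of algebras isomorphic to $\mathbf{Ra}(\mathbf{D})$ for some subalgebra $\mathbf{D}$ of $\mathsf{Nr}_3\mathbf{D}'$ with $\mathbf{D}'\in\mathsf{CA}_m$. For a class $\mathsf{K}$, $\mathbf{S}\,\mathsf{K}$ is the class of algebras isomorphic to subalgebras of members of $\mathsf{K}$; thus $\mathbf{S}\,\mathsf{Nr}_3\mathsf{CA}_m$ is the class of algebras isomorphic to subalgebras of $\mathsf{Nr}_3\mathbf{D}$ for $\mathbf{D}\in\mathsf{CA}_m$. *)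

From mathcomp Require Import all_boot.
Set Implicit Arguments. Unset Strict Implicit. Unset Printing Implicit Defensive.

Definition is_BA (T : Type) (jn mt : T -> T -> T) (cp : T -> T) (zr un : T) : Prop :=
  (forall x y, jn x y = jn y x) /\ (forall x y, mt x y = mt y x) /\
  (forall x y z, mt x (jn y z) = jn (mt x y) (mt x z)) /\
  (forall x y z, jn x (mt y z) = mt (jn x y) (jn x z)) /\
  (forall x, jn x zr = x) /\ (forall x, mt x un = x) /\
  (forall x, jn x (cp x) = un) /\ (forall x, mt x (cp x) = zr).

Record NAops (T : Type) := NAOps {
  na_jn : T -> T -> T; na_mt : T -> T -> T; na_cp : T -> T;
  na_zr : T; na_un : T;
  na_comp : T -> T -> T;
  na_conv : T -> T;
  na_id : T
}.

Definition is_NA (T : Type) (o : NAops T) : Prop :=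
  is_BA (na_jn o) (na_mt o) (na_cp o) (na_zr o) (na_un o) /\
  (forall x y z, na_comp o (na_jn o x y) z = na_jn o (na_comp o x z) (na_comp o y z)) /\
  (forall x, na_comp o x (na_id o) = x) /\
  (forall x, na_conv o (na_conv o x) = x) /\
  (forall x y, na_conv o (na_jn o x y) = na_jn o (na_conv o x) (na_conv o y)) /\
  (forall x y, na_conv o (na_comp o x y) = na_comp o (na_conv o y) (na_conv o x)) /\
  (forall x y, na_jn o (na_comp o (na_conv o x) (na_cp o (na_comp o x y))) (na_cp o y)
               = na_cp o y).

Section NAnotions.
Variables (T : finType) (o : NAops T).
Definition na_le (x y : T) : bool := na_jn o x y == y.
Definition na_div : T := na_cp o (na_id o).
Definition atom_in (E : {set T}) (x : T) : bool :=
  [&& x \in E, x != na_zr o & [forall y in E, na_le y x ==> (y == na_zr o) || (y == x)]].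
Definition subalgebra (E : {set T}) : Prop :=
  na_zr o \in E /\ na_un o \in E /\ na_id o \in E /\
  (forall x y, x \in E -> y \in E -> na_jn o x y \in E) /\
  (forall x y, x \in E -> y \in E -> na_mt o x y \in E) /\
  (forall x, x \in E -> na_cp o x \in E) /\
  (forall x y, x \in E -> y \in E -> na_comp o x y \in E) /\
  (forall x, x \in E -> na_conv o x \in E).
Definition symmetric_in (E : {set T}) : Prop := forall x, x \in E -> na_conv o x = x.

Definition mat := {ffun 'I_3 * 'I_3 -> T}.
Definition basic3 (mu : mat) : bool :=
  [forall i : 'I_3, forall j : 'I_3, forall l : 'I_3,
     [&& atom_in [set: T] (mu (i, j)), na_le (mu (i, i)) (na_id o),
         na_conv o (mu (i, j)) == mu (j, i) &
         na_le (mu (i, j)) (na_comp o (mu (i, l)) (mu (l, j)))]].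
Definition B3 := {mu : mat | basic3 mu}.
End NAnotions.

Record CAops (T : Type) := CAOps {
  ca_jn : T -> T -> T; ca_mt : T -> T -> T; ca_cp : T -> T;
  ca_zr : T; ca_un : T;
  ca_c : nat -> T -> T;
  ca_d : nat -> nat -> T
}.

Definition ca_le (T : Type) (o : CAops T) (x y : T) : Prop := ca_jn o x y = y.

(* CA_m (Henkin-Monk-Tarski axioms C0-C7), indices i,j,k < m *)
Definition is_CA (m : nat) (T : Type) (o : CAops T) : Prop :=
  is_BA (ca_jn o) (ca_mt o) (ca_cp o) (ca_zr o) (ca_un o) /\
  (forall i, i < m -> ca_c o i (ca_zr o) = ca_zr o) /\
  (forall i x, i < m -> ca_le o x (ca_c o i x)) /\
  (forall i x y, i < m ->
     ca_c o i (ca_mt o x (ca_c o i y)) = ca_mt o (ca_c o i x) (ca_c o i y)) /\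
  (forall i j x, i < m -> j < m -> ca_c o i (ca_c o j x) = ca_c o j (ca_c o i x)) /\
  (forall i, i < m -> ca_d o i i = ca_un o) /\
  (forall i j k, i < m -> j < m -> k < m -> k != i -> k != j ->
     ca_d o i j = ca_c o k (ca_mt o (ca_d o i k) (ca_d o k j))) /\
  (forall i j x, i < m -> j < m -> i != j ->
     ca_mt o (ca_c o i (ca_mt o (ca_d o i j) x))
             (ca_c o i (ca_mt o (ca_d o i j) (ca_cp o x))) = ca_zr o).

Definition ca_s (T : Type) (o : CAops T) (i j : nat) (x : T) : T :=
  ca_c o i (ca_mt o (ca_d o i j) x).

Definition ra_conv (T : Type) (o : CAops T) (x : T) : T :=
  ca_s o 2 0 (ca_s o 0 1 (ca_s o 1 2 x)).
Definition ra_comp (T : Type) (o : CAops T) (x y : T) : T :=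
  ca_c o 2 (ca_mt o (ca_s o 1 2 x) (ca_s o 0 2 y)).

(* A (an NA) belongs to S Ra CA_m: A is isomorphic to a subalgebra of Ra(D)
   for some subalgebra D (universe Dsub) of Nr_3 D', with D' in CA_m. *)
Definition in_SRaCA (m : nat) (T : Type) (o : NAops T) : Prop :=
  exists (D' : Type) (oD : CAops D'), is_CA m oD /\
  exists Dsub : D' -> Prop,
    (Dsub (ca_zr oD) /\ Dsub (ca_un oD) /\
     (forall x y, Dsub x -> Dsub y -> Dsub (ca_jn oD x y)) /\
     (forall x y, Dsub x -> Dsub y -> Dsub (ca_mt oD x y)) /\
     (forall x, Dsub x -> Dsub (ca_cp oD x)) /\
     (forall i x, i < 3 -> Dsub x -> Dsub (ca_c oD i x)) /\
     (forall i j, i < 3 -> j < 3 -> Dsub (ca_d oD i j)) /\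
     (forall x, Dsub x -> forall i, 3 <= i < m -> ca_c oD i x = x)) /\
  exists h : T -> D',
    injective h /\
    (* h maps into the universe of Ra(D) *)
    (forall a, Dsub (h a) /\ ca_c oD 2 (h a) = h a) /\
    (forall a b, h (na_jn o a b) = ca_jn oD (h a) (h b)) /\
    (forall a b, h (na_mt o a b) = ca_mt oD (h a) (h b)) /\
    (forall a, h (na_cp o a) = ca_cp oD (h a)) /\
    h (na_zr o) = ca_zr oD /\ h (na_un o) = ca_un oD /\
    h (na_id o) = ca_d oD 0 1 /\
    (forall a, h (na_conv o a) = ra_conv oD (h a)) /\
    (forall a b, h (na_comp o a b) = ra_comp oD (h a) (h b)).

(* A CA_n (given by o) belongs to S Nr_n CA_m: it embeds into Nr_n D, D in CA_m. *)
Definition in_SNrCA (n m : nat) (T : Type) (o : CAops T) : Prop :=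
  exists (D : Type) (oD : CAops D), is_CA m oD /\
  exists h : T -> D,
    injective h /\
    (forall x i, n <= i < m -> ca_c oD i (h x) = h x) /\
    (forall x y, h (ca_jn o x y) = ca_jn oD (h x) (h y)) /\
    (forall x y, h (ca_mt o x y) = ca_mt oD (h x) (h y)) /\
    (forall x, h (ca_cp o x) = ca_cp oD (h x)) /\
    h (ca_zr o) = ca_zr oD /\ h (ca_un o) = ca_un oD /\
    (forall i x, i < n -> h (ca_c o i x) = ca_c oD i (h x)) /\
    (forall i j, i < n -> j < n -> h (ca_d o i j) = ca_d oD i j).

Section CaB3.
Variables (T : finType) (o : NAops T).
Definition Ca_cyl (i : nat) (X : {set B3 o}) : {set B3 o} :=
  [set mu : B3 o | [exists mu' in X, [forall l : 'I_3, forall k : 'I_3,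
      ((nat_of_ord l != i) && (nat_of_ord k != i)) ==> (val mu (l, k) == val mu' (l, k))]]].
Definition Ca_diag (i j : nat) : {set B3 o} :=
  [set mu : B3 o | na_le o (val mu (inord i, inord j)) (na_id o)].
Definition CaB3 : CAops {set B3 o} :=
  @CAOps {set B3 o} (@setU _) (@setI _) (fun X => ~: X) set0 setT Ca_cyl Ca_diag.
End CaB3.

(* Both parts follow from one fact: there is no map g from A into the two-dimensional
   elements of a CA_(p+1) preserving the Boolean operations, with c_2(s^1_2 g y . s^0_2 g z)
   below g (y ; z) and c_1 (g b) = 1 for every atom b.  Such a g arises from an embedding
   into Ra CA_(p+1), and from an embedding of Ca(B_3(A)) into Nr_3 CA_(p+1) through
   a |-> {mu | mu_01 <= a}.

   Transporting g along substitutions labels the edges of networks on p+1 points, and a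
   nonzero element below the edges y, z, x of a triangle forces x . (y ; z) <> 0.  Put the at
   least p^(p-1) atoms of A below u on the edge (0, p).  At step k, move one of them, a, to the
   edge (0, k+1); every other atom b then needs a label e on (k+1, p) from the atoms of E.
   The triangle (0, k+1, p) rules out e = 1' (a <> b) and e = u (no 1-cycles), and the
   triangles (i, k+1, p) rule out the labels already on (i, p).  By pigeonhole one label
   serves p^(p-2-k) of the atoms, and the network grows.  After p-2 steps the p-2 atoms of
   E other than 1' and u are used up while atoms are still left: a contradiction. *)

From mathcomp Require Import all_boot.
From mathcomp Require Import zify.
From Stdlib Require Import Classical.
Set Implicit Arguments. Unset Strict Implicit. Unset Printing Implicit Defensive.

Section BooleanAlgebra.
Variables (T : Type) (J M : T -> T -> T) (C : T -> T) (Z U : T).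
Hypothesis HB : is_BA J M C Z U.

Lemma joinC x y : J x y = J y x. Proof. by case: HB. Qed.
Lemma meetC x y : M x y = M y x. Proof. by case: HB => _ []. Qed.
Lemma meetUr x y z : M x (J y z) = J (M x y) (M x z).
Proof. by case: HB => _ [] _ []. Qed.
Lemma joinIr x y z : J x (M y z) = M (J x y) (J x z).
Proof. by case: HB => _ [] _ [] _ []. Qed.
Lemma joinx0 x : J x Z = x. Proof. by case: HB => _ [] _ [] _ [] _ []. Qed.
Lemma meetx1 x : M x U = x. Proof. by case: HB => _ [] _ [] _ [] _ [] _ []. Qed.
Lemma joinxC x : J x (C x) = U. Proof. by case: HB => _ [] _ [] _ [] _ [] _ [] _ []. Qed.
Lemma meetxC x : M x (C x) = Z. Proof. by case: HB => _ [] _ [] _ [] _ [] _ [] _ []. Qed.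

Lemma joinxx x : J x x = x.
Proof. by rewrite -[J x x]meetx1 -(joinxC x) -joinIr meetxC joinx0. Qed.
Lemma joinx1 x : J x U = U.
Proof. by rewrite -[J x U]meetx1 -{2}(joinxC x) -joinIr meetC meetx1 joinxC. Qed.
Lemma meetKU x y : J x (M x y) = x.
Proof. by rewrite -{1}(meetx1 x) -meetUr joinC joinx1 meetx1. Qed.
Lemma meetxx x : M x x = x.
Proof. by rewrite -[M x x]joinx0 -(meetxC x) -meetUr joinxC meetx1. Qed.
Lemma meetx0 x : M x Z = Z.
Proof. by rewrite -[M x Z]joinx0 -{2}(meetxC x) -meetUr joinC joinx0 meetxC. Qed.
Lemma joinKI x y : M x (J x y) = x.
Proof. by rewrite -{1}(joinx0 x) -joinIr meetC meetx0 joinx0. Qed.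
Lemma join0x x : J Z x = x. Proof. by rewrite joinC joinx0. Qed.
Lemma meet1x x : M U x = x. Proof. by rewrite meetC meetx1. Qed.
Lemma meet0x x : M Z x = Z. Proof. by rewrite meetC meetx0. Qed.
Lemma join1x x : J U x = U. Proof. by rewrite joinC joinx1. Qed.
Lemma meetUl x y z : M (J y z) x = J (M y x) (M z x).
Proof. by rewrite meetC meetUr !(meetC x). Qed.

(* Associativity is not among Huntington's axioms here: both sides agree below x and below C x. *)
Lemma joinA x y z : J x (J y z) = J (J x y) z.
Proof.
set L := J x (J y z); set R := J (J x y) z.
have onx : M x L = M x R by rewrite /L /R joinKI meetUr joinKI meetKU.
have onCx : M (C x) L = M (C x) R.
  by rewrite /L /R !meetUr !(meetC (C x) x) meetxC !join0x.
rewrite -[L]meetx1 -(joinxC x) meetUr (meetC L x) (meetC L (C x)) onx onCx.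
by rewrite -!(meetC R) -meetUr joinxC meetx1.
Qed.

Lemma compl_uniq x y : J x y = U -> M x y = Z -> y = C x.
Proof.
move=> joinU meetZ.
have -> : y = M (C x) y by rewrite -{1}(meetx1 y) -(joinxC x) meetUr (meetC y x) meetZ join0x meetC.
by rewrite -{2}(meetx1 (C x)) -joinU meetUr (meetC (C x) x) meetxC join0x.
Qed.

Lemma complK x : C (C x) = x.
Proof. by symmetry; apply: compl_uniq; [rewrite joinC joinxC | rewrite meetC meetxC]. Qed.
End BooleanAlgebra.

Lemma is_BA_dual (T : Type) (J M : T -> T -> T) (C : T -> T) (Z U : T) :
  is_BA J M C Z U -> is_BA M J C U Z.
Proof.
move=> HB; do !split; first [exact: (meetC HB) | exact: (joinC HB) | exact: (joinIr HB)
  | exact: (meetUr HB) | exact: (meetx1 HB) | exact: (joinx0 HB) | exact: (meetxC HB)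
  | exact: (joinxC HB)].
Qed.

Section BooleanAlgebraAssoc.
Variables (T : Type) (J M : T -> T -> T) (C : T -> T) (Z U : T).
Hypothesis HB : is_BA J M C Z U.

Lemma meetA x y z : M x (M y z) = M (M x y) z. Proof. exact: (joinA (is_BA_dual HB)). Qed.

Lemma complU x y : C (J x y) = M (C x) (C y).
Proof.
symmetry; apply: (compl_uniq HB).
- rewrite (joinIr HB) -!(joinA HB) (joinxC HB) (joinx1 HB) (meetx1 HB).
  by rewrite (joinC HB y (C x)) (joinA HB) (joinxC HB) (join1x HB).
- rewrite (meetUl HB) meetA (meetxC HB) (meet0x HB) (join0x HB).
  by rewrite (meetC HB (C x) (C y)) meetA (meetxC HB) (meet0x HB).
Qed.

End BooleanAlgebraAssoc.

Section BooleanAlgebraOrder.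
Variables (T : Type) (J M : T -> T -> T) (C : T -> T) (Z U : T).
Hypothesis HB : is_BA J M C Z U.

Lemma complI x y : C (M x y) = J (C x) (C y). Proof. exact: (complU (is_BA_dual HB)). Qed.
Lemma compl0 : C Z = U.
Proof. by symmetry; apply: (compl_uniq HB); rewrite ?(join0x HB) ?(meet0x HB). Qed.

Definition ba_le x y := J x y = y.
Local Notation le := ba_le.

Lemma meet_idPl x y : le x y <-> M x y = x.
Proof.
split=> h; first by rewrite -h (joinKI HB).
by rewrite /ba_le -h (joinC HB) (meetC HB) (meetKU HB).
Qed.
Lemma lexx x : le x x. Proof. exact: (joinxx HB). Qed.
Lemma le_trans x y z : le x y -> le y z -> le x z.
Proof. by rewrite /ba_le => h1 h2; rewrite -h2 (joinA HB) h1. Qed.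
Lemma le_anti x y : le x y -> le y x -> x = y.
Proof. by rewrite /ba_le => h1 h2; rewrite -h1 (joinC HB). Qed.
Lemma leUl x y : le x (J x y). Proof. by rewrite /ba_le (joinA HB) (joinxx HB). Qed.
Lemma leUr x y : le y (J x y). Proof. by rewrite (joinC HB); exact: leUl. Qed.
Lemma leIl x y : le (M x y) x.
Proof. by apply/meet_idPl; rewrite (meetC HB) (meetA HB) (meetxx HB). Qed.
Lemma leIr x y : le (M x y) y. Proof. by rewrite (meetC HB); exact: leIl. Qed.
Lemma leUx x y z : le x z -> le y z -> le (J x y) z.
Proof. by rewrite /ba_le => h1 h2; rewrite -(joinA HB) h2 h1. Qed.
Lemma lexI x y z : le z x -> le z y -> le z (M x y).
Proof. by move=> /meet_idPl h1 /meet_idPl h2; apply/meet_idPl; rewrite (meetA HB) h1 h2. Qed.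
Lemma lex1 x : le x U. Proof. exact: (joinx1 HB). Qed.
Lemma lex0 x : le x Z -> x = Z. Proof. by rewrite /ba_le (joinx0 HB). Qed.
Lemma leI2 x y x' y' : le x x' -> le y y' -> le (M x y) (M x' y').
Proof.
by move=> h1 h2; apply: lexI; apply: le_trans; [apply: leIl | done | apply: leIr | done].
Qed.
Lemma leU2 x y x' y' : le x x' -> le y y' -> le (J x y) (J x' y').
Proof.
by move=> h1 h2; apply: leUx; apply: le_trans; [apply: h1 | apply: leUl | apply: h2 | apply: leUr].
Qed.
Lemma le_meetC0 x y : M x (C y) = Z -> le x y.
Proof. by move=> h; apply/meet_idPl; rewrite -{2}(meetx1 HB x) -(joinxC HB y) (meetUr HB) h (joinx0 HB). Qed.
Lemma meetC0_le x y : le x y -> M x (C y) = Z.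
Proof. by move/meet_idPl=> <-; rewrite -(meetA HB) (meetxC HB) (meetx0 HB). Qed.
Lemma le_neq0 x y : le x y -> x <> Z -> y <> Z.
Proof. by move=> h hx hy; apply: hx; apply: lex0; rewrite -hy. Qed.

Lemma foldr_join_neq0 (I : eqType) (f : I -> T) (r : seq I) :
  foldr J Z (map f r) <> Z -> exists2 i, i \in r & f i <> Z.
Proof.
elim: r => [// | i r IH] /= h.
case: (classic (f i = Z)) => [hi | hi]; last by exists i; rewrite ?inE ?eqxx.
rewrite hi (join0x HB) in h; have [i' hi' hf] := IH h.
by exists i'; rewrite // inE hi' orbT.
Qed.
End BooleanAlgebraOrder.

Section CylindricAlgebra.
Variables (D : Type) (o : CAops D) (m : nat).
Hypothesis HC : is_CA m o.
Local Notation J := (ca_jn o). Local Notation M := (ca_mt o).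
Local Notation C := (ca_cp o). Local Notation Z := (ca_zr o).
Local Notation U := (ca_un o). Local Notation c := (ca_c o).
Local Notation d := (ca_d o). Local Notation s := (ca_s o).
Local Notation le := (ba_le J).

Let HB : is_BA J M C Z U := HC.1.

Lemma cyl0 i : i < m -> c i Z = Z. Proof. by case: HC => _ [h _]; apply: h. Qed.
Lemma le_cyl i x : i < m -> le x (c i x). Proof. by case: HC => _ [_ [h _]]; apply: h. Qed.
Lemma cyl_meet_cyl i x y : i < m -> c i (M x (c i y)) = M (c i x) (c i y).
Proof. by case: HC => _ [_ [_ [h _]]]; apply: h. Qed.
Lemma cylC i j x : i < m -> j < m -> c i (c j x) = c j (c i x).
Proof. by case: HC => _ [_ [_ [_ [h _]]]]; apply: h. Qed.
Lemma diagxx i : i < m -> d i i = U.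
Proof. by case: HC => _ [_ [_ [_ [_ [h _]]]]]; apply: h. Qed.
Lemma diag_cyl i j k : i < m -> j < m -> k < m -> k != i -> k != j ->
  d i j = c k (M (d i k) (d k j)).
Proof. by case: HC => _ [_ [_ [_ [_ [_ [h _]]]]]]; apply: h. Qed.
Lemma cyl_diag_disj i j x : i < m -> j < m -> i != j ->
  M (c i (M (d i j) x)) (c i (M (d i j) (C x))) = Z.
Proof. by case: HC => _ [_ [_ [_ [_ [_ [_ h]]]]]]; apply: h. Qed.

Lemma cyl1 i : i < m -> c i U = U.
Proof. by move=> hi; have := le_cyl U hi; rewrite /ba_le (join1x HB). Qed.
Lemma cylK i x : i < m -> c i (c i x) = c i x.
Proof. by move=> hi; rewrite -{1}(meet1x HB (c i x)) cyl_meet_cyl // cyl1 // (meet1x HB). Qed.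
Lemma cylIr i x y : i < m -> c i y = y -> c i (M x y) = M (c i x) y.
Proof. by move=> hi hy; rewrite -{1}hy cyl_meet_cyl // hy. Qed.
Lemma cylIl i x y : i < m -> c i y = y -> c i (M y x) = M y (c i x).
Proof. by move=> hi hy; rewrite (meetC HB) cylIr // (meetC HB). Qed.
Lemma cyl_fixI k x y : k < m -> c k x = x -> c k y = y -> c k (M x y) = M x y.
Proof. by move=> hk hx hy; rewrite cylIr // hx. Qed.
Lemma cyl_mono i x y : i < m -> le x y -> le (c i x) (c i y).
Proof.
move=> hi hxy.
have h : M x (c i y) = x by apply/(meet_idPl HB); apply: (le_trans HB) hxy (le_cyl _ hi).
by apply/(meet_idPl HB); rewrite -cyl_meet_cyl // h.
Qed.
Lemma cyl_compl_cyl i x : i < m -> c i (C (c i x)) = C (c i x).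
Proof.
move=> hi; apply: (le_anti HB); last exact: le_cyl.
apply: (le_meetC0 HB); rewrite (complK HB).
by rewrite -cyl_meet_cyl // (meetC HB) (meetxC HB) cyl0.
Qed.
Lemma cylU i x y : i < m -> c i (J x y) = J (c i x) (c i y).
Proof.
move=> hi; apply: (le_anti HB); last first.
  by apply: (leUx HB); apply: cyl_mono => //; [apply: (leUl HB) | apply: (leUr HB)].
set z := J (c i x) (c i y).
have cz : c i z = z.
  have e : C z = c i (M (C (c i x)) (c i (C (c i y)))).
    by rewrite cyl_meet_cyl // !cyl_compl_cyl // /z (complU HB).
  by rewrite -(complK HB z) e cyl_compl_cyl.
by rewrite -cz; apply: cyl_mono => //; apply: (leU2 HB); exact: le_cyl.
Qed.
Lemma cyl_neq0 i x : i < m -> c i x <> Z -> x <> Z.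
Proof. by move=> hi h hx; apply: h; rewrite hx cyl0. Qed.
Lemma meet_neq0_le_cyl i y x : i < m -> c i y = y -> y <> Z -> le y (c i x) -> M y x <> Z.
Proof.
move=> hi hy hnz hle hyx; apply: hnz.
have := cyl_meet_cyl x y hi; rewrite hy (meetC HB x) hyx cyl0 // => e.
by move/(meet_idPl HB): hle; rewrite (meetC HB) -e.
Qed.

Lemma meet_cyl_foldr (I : Type) w y (f : I -> D) (r : seq I) k : k < m ->
  M w (c k (M y (foldr J Z (map f r)))) = foldr J Z (map (fun i => M w (c k (M y (f i)))) r).
Proof.
move=> hk; elim: r => [| i r IH] /=; first by rewrite (meetx0 HB) cyl0 // (meetx0 HB).
by rewrite (meetUr HB) cylU // (meetUr HB) IH.
Qed.

Lemma le_diag_cas i j x : i < m -> j < m -> i != j -> le (M (d i j) (s i j x)) x.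
Proof.
move=> hi hj hij; apply: (le_meetC0 HB).
rewrite (meetC HB (d i j)) -(meetA HB).
apply: (lex0 HB); rewrite -(cyl_diag_disj x hi hj hij).
by apply: (leI2 HB); [exact: (lexx HB) | exact: le_cyl].
Qed.
Lemma diagC i j : i < m -> j < m -> d i j = d j i.
Proof.
have le_dC i' j' : i' < m -> j' < m -> i' != j' -> le (d i' j') (d j' i').
  move=> hi hj hij.
  have e : c i' (M (d i' j') (d j' i')) = U by rewrite (meetC HB) -diag_cyl ?diagxx // eq_sym.
  by have := le_diag_cas (d j' i') hi hj hij; rewrite /ca_s e (meetx1 HB).
move=> hi hj; case: (eqVneq i j) => [-> // | hij].
by apply: (le_anti HB); apply: le_dC; rewrite // eq_sym.
Qed.
Lemma cyl_diagl i j : i < m -> j < m -> i != j -> c i (d i j) = U.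
Proof.
move=> hi hj hij; apply: (le_anti HB); first exact: (lex1 HB).
have -> : U = c i (M (d j i) (d i j)) by rewrite -diag_cyl ?diagxx // eq_sym.
by apply: cyl_mono => //; exact: (leIr HB).
Qed.
Lemma cyl_diagr i j : i < m -> j < m -> i != j -> c j (d i j) = U.
Proof. by move=> hi hj hij; rewrite diagC // cyl_diagl // eq_sym. Qed.
Lemma cyl_diag_fix i j k : i < m -> j < m -> k < m -> k != i -> k != j -> c k (d i j) = d i j.
Proof. by move=> *; rewrite (diag_cyl (i:=i) (j:=j) (k:=k)) // cylK. Qed.

Lemma casU i j x y : i < m -> s i j (J x y) = J (s i j x) (s i j y).
Proof. by move=> hi; rewrite /ca_s (meetUr HB) cylU. Qed.
Lemma cas1 i j : i < m -> j < m -> i != j -> s i j U = U.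
Proof. by move=> *; rewrite /ca_s (meetx1 HB) cyl_diagl. Qed.
Lemma cas0 i j : i < m -> s i j Z = Z.
Proof. by move=> *; rewrite /ca_s (meetx0 HB) cyl0. Qed.
Lemma cas_mono i j x y : i < m -> le x y -> le (s i j x) (s i j y).
Proof. by move=> hi h; apply: cyl_mono => //; apply: (leI2 HB) => //; exact: (lexx HB). Qed.
Lemma cas_compl i j x : i < m -> j < m -> i != j -> s i j (C x) = C (s i j x).
Proof.
move=> hi hj hij; apply: (compl_uniq HB); last exact: cyl_diag_disj.
by rewrite -casU // (joinxC HB) cas1.
Qed.
Lemma casI i j x y : i < m -> j < m -> i != j -> s i j (M x y) = M (s i j x) (s i j y).
Proof.
move=> hi hj hij.
by rewrite -[M x y](complK HB) (complI HB) cas_compl // casU // !cas_compl // (complU HB) !(complK HB).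
Qed.
Lemma cas_fix i j y : i < m -> j < m -> i != j -> c i y = y -> s i j y = y.
Proof. by move=> hi hj hij hy; rewrite /ca_s cylIr // cyl_diagl // (meet1x HB). Qed.
Lemma cyl_cas i j y : i < m -> c i (s i j y) = s i j y.
Proof. by move=> hi; rewrite /ca_s cylK. Qed.
Lemma cyl_casC i j k y : i < m -> j < m -> k < m -> k != i -> k != j ->
  c k (s i j y) = s i j (c k y).
Proof.
move=> hi hj hk hki hkj.
by rewrite /ca_s cylC // (meetC HB (d i j)) cylIr ?cyl_diag_fix // (meetC HB).
Qed.
Lemma cyl_cas_target i j y : i < m -> j < m -> i != j -> c j y = y -> c j (s i j y) = c i y.
Proof. by move=> hi hj hij hy; rewrite /ca_s cylC // cylIr // cyl_diagr // (meet1x HB). Qed.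
Lemma cas_trans i j k y : i < m -> j < m -> k < m -> i != j -> j != k -> i != k ->
  c j y = y -> s j k (s i j y) = s i k y.
Proof.
move=> hi hj hk hij hjk hik hy.
rewrite /ca_s -cylIl ?cyl_diag_fix // 1?eq_sym //.
by rewrite cylC // (meetA HB) (meetC HB (d j k)) cylIr // -diag_cyl // eq_sym.
Qed.
Lemma casK i j y : i < m -> j < m -> i != j -> c j y = y -> s j i (s i j y) = y.
Proof.
move=> hi hj hij hy.
have diag_meet_cas : M (d i j) (s i j y) = M (d i j) y.
  apply: (le_anti HB); apply: (lexI HB); try exact: (leIl HB).
    exact: le_diag_cas.
  exact: le_cyl.
by rewrite {1}/ca_s -diagC // diag_meet_cas cylIr // cyl_diagr // (meet1x HB).
Qed.
Lemma casC a b e f y : a < m -> b < m -> e < m -> f < m ->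
  e != a -> e != b -> a != f -> s a b (s e f y) = s e f (s a b y).
Proof.
move=> ha hb he hf hea heb haf.
rewrite /ca_s -cylIl ?cyl_diag_fix // -[in RHS]cylIl ?cyl_diag_fix // 1?eq_sym //.
by rewrite cylC // !(meetA HB) (meetC HB (d a b)).
Qed.
End CylindricAlgebra.

Section Edges.
Variables (D : Type) (o : CAops D) (m : nat).
Hypothesis HC : is_CA m o.
Hypothesis hm : 4 < m.
Local Notation J := (ca_jn o). Local Notation M := (ca_mt o).
Local Notation Z := (ca_zr o).
Local Notation U := (ca_un o). Local Notation c := (ca_c o).
Local Notation s := (ca_s o).
Local Notation le := (ba_le J).

Let m_gt3 : 3 < m. Proof. exact: ltnW hm. Qed.
Let m_gt2 : 2 < m. Proof. exact: ltnW m_gt3. Qed.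
Let m_gt1 : 1 < m. Proof. exact: ltnW m_gt2. Qed.
Let m_gt0 : 0 < m. Proof. exact: ltnW m_gt1. Qed.
Local Hint Resolve m_gt0 m_gt1 m_gt2 m_gt3 : core.

Definition subst i j x := if i == j then x else s i j x.
Definition two_dim x := forall k, 2 <= k < m -> c k x = x.
(* The two-dimensional x with its dimensions 0 and 1 renamed to i and j. *)
Definition edge x i j := subst 0 i (subst 1 j x).

Lemma subst_xx i y : subst i i y = y. Proof. by rewrite /subst eqxx. Qed.
Lemma substI i j x y : i < m -> j < m -> subst i j (M x y) = M (subst i j x) (subst i j y).
Proof. rewrite /subst; case: (eqVneq i j) => // *; exact: (casI HC). Qed.
Lemma substU i j x y : i < m -> subst i j (J x y) = J (subst i j x) (subst i j y).
Proof. rewrite /subst; case: (eqVneq i j) => // *; exact: (casU HC). Qed.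
Lemma subst0 i j : i < m -> subst i j Z = Z.
Proof. rewrite /subst; case: (eqVneq i j) => // *; exact: (cas0 HC). Qed.
Lemma subst1 i j : i < m -> j < m -> subst i j U = U.
Proof. rewrite /subst; case: (eqVneq i j) => // *; exact: (cas1 HC). Qed.
Lemma subst_mono i j x y : i < m -> le x y -> le (subst i j x) (subst i j y).
Proof. rewrite /subst; case: (eqVneq i j) => // *; exact: (cas_mono HC). Qed.
Lemma subst_fix i j y : i < m -> j < m -> c i y = y -> subst i j y = y.
Proof. rewrite /subst; case: (eqVneq i j) => // *; exact: (cas_fix HC). Qed.
Lemma cyl_substC i j k y : i < m -> j < m -> k < m -> k != i -> k != j ->
  c k (subst i j y) = subst i j (c k y).
Proof. rewrite /subst; case: (eqVneq i j) => // *; exact: (cyl_casC HC). Qed.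
Lemma cyl_subst i j y : i < m -> i != j -> c i (subst i j y) = subst i j y.
Proof. rewrite /subst; case: (eqVneq i j) => // *; exact: (cyl_cas HC). Qed.
Lemma cyl_subst_target i j y : i < m -> j < m -> i != j -> c j y = y ->
  c j (subst i j y) = c i y.
Proof. rewrite /subst; case: (eqVneq i j) => // *; exact: (cyl_cas_target HC). Qed.
Lemma subst_trans i j k y : i < m -> j < m -> k < m -> i != j -> j != k ->
  c j y = y -> subst j k (subst i j y) = subst i k y.
Proof.
move=> hi hj hk hij hjk hy; rewrite /subst (negbTE hij) (negbTE hjk).
by case: eqVneq => [<- | hik]; [exact: (casK HC) | exact: (cas_trans HC)].
Qed.
Lemma substC a b e f y : a < m -> b < m -> e < m -> f < m ->
  e != a -> e != b -> a != f -> subst a b (subst e f y) = subst e f (subst a b y).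
Proof.
by rewrite /subst => *; case: (eqVneq a b) => // hab; case: (eqVneq e f) => // hef; exact: (casC HC).
Qed.

Lemma edgeI x y i j : i < m -> j < m -> edge (M x y) i j = M (edge x i j) (edge y i j).
Proof. by move=> hi hj; rewrite /edge !substI. Qed.
Lemma edgeU x y i j : edge (J x y) i j = J (edge x i j) (edge y i j).
Proof. by rewrite /edge !substU. Qed.
Lemma edge0 i j : edge Z i j = Z. Proof. by rewrite /edge !subst0. Qed.
Lemma edge1 i j : i < m -> j < m -> edge U i j = U.
Proof. by move=> hi hj; rewrite /edge !subst1. Qed.

Lemma cyl_subst1 x j k : two_dim x -> j < m -> k < m -> k != 0 -> k != j ->
  c k (subst 1 j x) = subst 1 j x.
Proof.
move=> hx hj hk hk0 hkj; case: (eqVneq k 1) => [ek | hk1]; first by subst k; exact: cyl_subst.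
by rewrite cyl_substC // hx //; case: k hk hk0 hk1 {hkj} => [|[|k]].
Qed.
Lemma cyl_edge x i j k : two_dim x -> i < m -> j < m -> k < m -> i != j -> k != i -> k != j ->
  c k (edge x i j) = edge x i j.
Proof.
move=> hx hi hj hk hij hki hkj; rewrite /edge.
case: (eqVneq k 0) => [ek | hk0]; first by subst k; exact: cyl_subst.
case: (eqVneq k 1) => [ek | hk1]; first by subst k; rewrite cyl_substC // cyl_subst.
by rewrite cyl_substC // cyl_substC // hx //; case: k hk hk0 hk1 {hki hkj} => [|[|k]].
Qed.
Lemma subst_edgel x i j l : two_dim x -> i < m -> j < m -> l < m -> i != j -> l != i -> l != j ->
  j != 0 -> subst i l (edge x i j) = edge x l j.
Proof.
move=> hx hi hj hl hij hli hlj hj0; rewrite /edge.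
case: (eqVneq i 0) => [-> | hi0]; first by rewrite subst_xx.
by rewrite subst_trans // 1?eq_sym //; apply: cyl_subst1.
Qed.
Lemma subst_edger x i j l : two_dim x -> i < m -> j < m -> l < m -> i != j -> l != i -> l != j ->
  j != 0 -> l != 0 -> subst j l (edge x i j) = edge x i l.
Proof.
move=> hx hi hj hl hij hli hlj hj0 hl0; rewrite /edge.
case: (eqVneq j 1) => [e | hj1].
  by subst j; rewrite subst_xx substC // eq_sym.
rewrite substC // 1?eq_sym // subst_trans // 1?eq_sym //.
by apply: hx; case: j hj hj0 hj1 {hij hlj} => [|[|j]].
Qed.

(* In the relation algebra reading: the point j witnesses that the edges (i, j) and (j, k),
   labelled y and z, compose into the edge (i, k) labelled w. *)
Definition composes y z w i j k := le (c j (M (edge y i j) (edge z j k))) (edge w i k).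

Section Moves.
Variables (y z w : D).
Hypotheses (hy : two_dim y) (hz : two_dim z) (hw : two_dim w).

Lemma composes_movel i j k l : i < m -> j < m -> k < m -> l < m ->
  i != j -> i != k -> j != k -> j != 0 -> k != 0 -> l != i -> l != j -> l != k ->
  composes y z w i j k -> composes y z w l j k.
Proof.
move=> hi hj hk hl hij hik hjk hj0 hk0 hli hlj hlk h.
have := subst_mono l hi h.
rewrite -cyl_substC // 1?eq_sym // substI // subst_edgel // (subst_fix (y := edge z j k)) //.
  by rewrite subst_edgel.
by apply: cyl_edge; rewrite // eq_sym.
Qed.

Lemma composes_movem i j k l : i < m -> j < m -> k < m -> l < m ->
  i != j -> i != k -> j != k -> j != 0 -> k != 0 -> l != i -> l != j -> l != k -> l != 0 ->
  composes y z w i j k -> composes y z w i l k.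
Proof.
move=> hi hj hk hl hij hik hjk hj0 hk0 hli hlj hlk hl0 h.
rewrite /composes -(subst_edger (x := y) (i := i) (j := j)) //.
rewrite -(subst_edgel (x := z) (i := j) (j := k)) // 1?eq_sym //.
rewrite -substI // cyl_subst_target // 1?eq_sym //.
by apply: (cyl_fixI HC) => //; apply: cyl_edge.
Qed.

Lemma composes_mover i j k l : i < m -> j < m -> k < m -> l < m ->
  i != j -> i != k -> j != k -> j != 0 -> k != 0 -> l != i -> l != j -> l != k -> l != 0 ->
  composes y z w i j k -> composes y z w i j l.
Proof.
move=> hi hj hk hl hij hik hjk hj0 hk0 hli hlj hlk hl0 h.
have := subst_mono l hk h.
rewrite -cyl_substC // 1?eq_sym // substI // (subst_fix (y := edge y i j)) //.
  by rewrite subst_edger // subst_edger.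
by apply: cyl_edge; rewrite // eq_sym.
Qed.

Lemma exists_fresh a b e : exists f, [/\ 0 < f < m, f != a, f != b & f != e].
Proof.
have [h1 | h1] := boolP ((1 != a) && (1 != b) && (1 != e)).
  by exists 1; case/andP: h1 => /andP [-> ->] ->; rewrite m_gt1.
have [h2 | h2] := boolP ((2 != a) && (2 != b) && (2 != e)).
  by exists 2; case/andP: h2 => /andP [-> ->] ->; rewrite m_gt2.
have [h3 | h3] := boolP ((3 != a) && (3 != b) && (3 != e)).
  by exists 3; case/andP: h3 => /andP [-> ->] ->; rewrite m_gt3.
by exists 4; move: h1 h2 h3; rewrite !negb_and !negbK => h1 h2 h3; split; lia.
Qed.

Hypothesis base : composes y z w 0 2 1.

Lemma composes_from i : i < m -> exists b e,
  [/\ b < m, e < m, i != b, i != e & [/\ b != e, b != 0, e != 0 & composes y z w i b e]].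
Proof.
move=> hi.
case: (eqVneq i 0) => [-> | hi0]; first by exists 2, 1.
case: (eqVneq i 1) => [-> | hi1].
  exists 2, 3; split => //; split => //.
  by apply: (composes_movel (i := 0)) => //; apply: (composes_mover (k := 1)).
case: (eqVneq i 2) => [-> | hi2].
  exists 3, 1; split => //; split => //.
  by apply: (composes_movel (i := 0)) => //; apply: (composes_movem (j := 2)).
exists 2, 1; split => //; split => //.
by apply: (composes_movel (i := 0)); rewrite // 1?eq_sym.
Qed.

Lemma composes_all i j k : i < m -> j < m -> k < m -> i != j -> i != k -> j != k ->
  j != 0 -> k != 0 -> composes y z w i j k.
Proof.
move=> hi hj hk hij hik hjk hj0 hk0.
have [b [e [hb he hib hie [hbe hb0 he0 h]]]] := composes_from hi.
have [e' [he' hie' hje' he'0 h']] :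
    exists e', [/\ e' < m, i != e', j != e', e' != 0 & composes y z w i j e'].
  case: (eqVneq b j) => [<- | hbj]; first by exists e.
  case: (eqVneq j e) => [hje | hje]; last first.
    exists e; split => //.
    by apply: (composes_movem (j := b)) => //; rewrite eq_sym.
  subst e; have [f [/andP [f0 fm] hfi hfb hfe]] := exists_fresh i b j.
  have hf0 : f != 0 by rewrite -lt0n.
  have hf : composes y z w i b f by apply: (composes_mover (k := j)) => //; rewrite eq_sym.
  exists f; split => //; try by rewrite eq_sym.
  by apply: (composes_movem (j := b)) => //; rewrite eq_sym.
case: (eqVneq e' k) => [<- // | he'k].
by apply: (composes_mover (k := e')) => //; rewrite eq_sym.
Qed.
End Moves.
End Edges.

Section SymmetricNA.
Variables (T : finType) (o : NAops T).
Hypothesis HNA : is_NA o.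
Hypothesis Hsym : symmetric_in o [set: T].
Local Notation J := (na_jn o). Local Notation M := (na_mt o).
Local Notation C := (na_cp o). Local Notation Z := (na_zr o).
Local Notation U := (na_un o). Local Notation comp := (na_comp o).
Local Notation I := (na_id o).
Local Notation le := (ba_le J).
Let HB : is_BA J M C Z U := HNA.1.

Lemma na_leP x y : na_le o x y <-> le x y.
Proof. by rewrite /na_le; split => [/eqP | ->]. Qed.

Lemma conv_id x : na_conv o x = x. Proof. by apply: Hsym; rewrite in_setT. Qed.
Lemma compC x y : comp x y = comp y x.
Proof.
by case: HNA => _ [_ [_ [_ [_ [h _]]]]]; rewrite -[comp x y]conv_id h !conv_id.
Qed.
Lemma compDl x y z : comp (J x y) z = J (comp x z) (comp y z).
Proof. by case: HNA => _ [h _]. Qed.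
Lemma comp1 x : comp x I = x. Proof. by case: HNA => _ [_ [h _]]. Qed.
Lemma comp1l x : comp I x = x. Proof. by rewrite compC comp1. Qed.
Lemma comp_mono x x' z z' : le x x' -> le z z' -> le (comp x z) (comp x' z').
Proof.
have monol a a' b : le a a' -> le (comp a b) (comp a' b).
  by move=> h; rewrite -h compDl; exact: (leUl HB).
move=> h1 h2; apply: (le_trans HB (monol _ _ _ h1)).
by rewrite compC (compC x'); apply: monol.
Qed.
Lemma peirce x y z : M (comp x y) z = Z -> M (comp x z) y = Z.
Proof.
move=> h.
have h1 : le z (C (comp x y)) by apply: (le_meetC0 HB); rewrite (complK HB) (meetC HB).
have tarski : le (comp x (C (comp x y))) (C y).
  by case: HNA => _ [_ [_ [_ [_ [_ t]]]]]; have := t x y; rewrite conv_id.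
have h2 : le (comp x z) (C y) by apply: (le_trans HB) tarski; apply: comp_mono => //; exact: (lexx HB).
by move/(meetC0_le HB): h2; rewrite (complK HB).
Qed.

Lemma atomP (E : {set T}) a y : atom_in o E a -> y \in E -> le y a -> y = Z \/ y = a.
Proof.
case/and3P => _ _ /forall_inP h hy hle.
by have := h y hy; rewrite /na_le hle eqxx /= => /orP [] /eqP; [left | right].
Qed.
Lemma atom_neq0 (E : {set T}) a : atom_in o E a -> a <> Z.
Proof. by case/and3P => _ /eqP. Qed.
Lemma atom_mem (E : {set T}) a : atom_in o E a -> a \in E.
Proof. by case/and3P. Qed.
Lemma atom_le_meet a x : atom_in o [set: T] a -> M a x <> Z -> le a x.
Proof.
move=> ha hnz; have [e | e] := atomP ha (in_setT (M a x)) (leIl HB a x) => //.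
exact/(meet_idPl HB).
Qed.
Lemma atom_meet0 a b : atom_in o [set: T] a -> atom_in o [set: T] b -> a <> b -> M a b = Z.
Proof.
move=> ha hb hab; case: (atomP ha (in_setT (M a b)) (leIl HB a b)) => // e.
have hle : le a b by apply/(meet_idPl HB).
by case: (atomP hb (in_setT a) hle) => h; [case: (atom_neq0 ha) | case: hab].
Qed.
Lemma atom_le_join a x y : atom_in o [set: T] a -> le a (J x y) -> le a x \/ le a y.
Proof.
move=> ha h.
have [hx | hx] := boolP (M a x == Z); last by left; apply: atom_le_meet => // /eqP; apply/negP.
have [hy | hy] := boolP (M a y == Z); last by right; apply: atom_le_meet => // /eqP; apply/negP.
exfalso; apply: (atom_neq0 ha).
by move/(meet_idPl HB): h => <-; rewrite (meetUr HB) (eqP hx) (eqP hy) (joinx0 HB).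
Qed.
Lemma atom_le_eq a b : atom_in o [set: T] a -> atom_in o [set: T] b -> le a b -> a = b.
Proof. by move=> ha hb h; case: (atomP hb (in_setT a) h) => // e; case: (atom_neq0 ha). Qed.

Hypothesis HidA : atom_in o [set: T] I.

(* By Peirce's law, (b ; b) . I = 0 would give b = (b ; I) . b = 0. *)
Lemma id_le_comp_self b : b <> Z -> le I (comp b b).
Proof.
move=> hb; have [h | h] := boolP (M I (comp b b) == Z); last first.
  by apply: atom_le_meet => // /eqP; apply/negP.
exfalso; apply: hb; have := peirce (x := b) (y := b) (z := I); rewrite comp1 (meetxx HB) => -> //.
by rewrite (meetC HB); apply/eqP.
Qed.

Variable E : {set T}.
Hypothesis HE : subalgebra o E.
Hypothesis HidE : atom_in o E I.

Lemma mem0 : Z \in E. Proof. by case: HE. Qed.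
Lemma memI : I \in E. Proof. by case: HE => _ [_ []]. Qed.
Lemma memJ x y : x \in E -> y \in E -> J x y \in E.
Proof. by case: HE => _ [_ [_ [h _]]]; apply: h. Qed.
Lemma memM x y : x \in E -> y \in E -> M x y \in E.
Proof. by case: HE => _ [_ [_ [_ [h _]]]]; apply: h. Qed.
Lemma memC x : x \in E -> C x \in E.
Proof. by case: HE => _ [_ [_ [_ [_ [h _]]]]]; apply: h. Qed.

Lemma atom_le_div e : atom_in o E e -> e <> I -> le e (C I).
Proof.
move=> he hne; apply: (le_meetC0 HB); rewrite (complK HB).
have hm : M e I \in E by apply: memM; [exact: atom_mem he | exact: memI].
case: (atomP HidE hm (leIr HB e I)) => // h.
have hle : le I e by apply/(meet_idPl HB); rewrite (meetC HB).
by case: (atomP he memI hle) => h2; [case: (atom_neq0 HidE h2) | case: hne].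
Qed.

Lemma exists_atom_le x : x \in E -> x <> Z -> exists2 e, atom_in o E e & le e x.
Proof.
move=> hx; move: {2}#|[set y in E | na_le o y x]| (leqnn #|[set y in E | na_le o y x]|) => n.
elim: n x hx => [|n IH] x hx hn hnz.
  have hx' : x \in [set y in E | na_le o y x] by rewrite inE hx; apply/na_leP; exact: (lexx HB).
  by move: hn; rewrite leqn0 => /eqP /cards0_eq h0; rewrite h0 inE in hx'.
have [ha | ha] := boolP (atom_in o E x); first by exists x => //; exact: (lexx HB).
have : ~~ [forall y in E, na_le o y x ==> (y == Z) || (y == x)].
  by move: ha; rewrite /atom_in hx /=; case: eqP.
rewrite negb_forall_in => /existsP [y /andP [hy]].
rewrite negb_imply negb_or => /and3P [/na_leP hyx hy0 hyx'].
have [e he hey] : exists2 e, atom_in o E e & le e y.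
  apply: (IH y hy) => //; last by move/eqP: hy0.
  have hsub : [set z in E | na_le o z y] \proper [set z in E | na_le o z x].
    apply/properP; split.
      apply/subsetP => z; rewrite !inE => /andP [-> /na_leP h]; apply/na_leP.
      exact: (le_trans HB h hyx).
    exists x; first by rewrite inE hx; apply/na_leP; exact: (lexx HB).
    rewrite inE hx /=; apply/negP => /na_leP h.
    by move/negP: hyx'; apply; apply/eqP; apply: (le_anti HB).
  by rewrite -ltnS; apply: leq_trans hn; apply: proper_card.
by exists e => //; apply: (le_trans HB hey).
Qed.

Lemma le_foldr_join (l : seq T) x : x \in l -> le x (foldr J Z l).
Proof.
elim: l => [// | h t IH]; rewrite inE => /orP [/eqP -> | hx] /=; first exact: (leUl HB).
by apply: (le_trans HB (IH hx)); exact: (leUr HB).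
Qed.

Lemma join_atoms : foldr J Z (enum [set x | atom_in o E x]) = U.
Proof.
set s := foldr J Z _.
have hs : s \in E.
  have : all (mem E) (enum [set x | atom_in o E x]).
    by apply/allP => x; rewrite mem_enum inE; exact: atom_mem.
  by rewrite /s; elim: (enum _) => [_ | h t IH /= /andP [h1 h2]]; [exact: mem0 | exact: memJ h1 (IH h2)].
apply: (le_anti HB); first exact: (lex1 HB).
case: (eqVneq (C s) Z) => [e | hne].
  by rewrite -(complK HB s) e (compl0 HB); exact: (lexx HB).
have [e he hle] := exists_atom_le (memC hs) (elimN eqP hne).
have hle2 : le e s by apply: le_foldr_join; rewrite mem_enum inE.
exfalso; apply: (atom_neq0 he); apply: (lex0 HB); rewrite -(meetxC HB s).
exact: (lexI HB).
Qed.
End SymmetricNA.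

Lemma exists_large_fibre (T1 T2 : finType) (S : {set T1}) (B : {set T2}) (f : T1 -> T2) n :
  (forall x, x \in S -> f x \in B) -> #|B| * n < #|S| ->
  exists2 y, y \in B & n < #|[set x in S | f x == y]|.
Proof.
move=> hf hlt; apply/exists_inP; move: hlt; apply: contraLR.
rewrite negb_exists_in -leqNgt => /forall_inP hsmall.
rewrite -sum1_card (partition_big f (mem B)) //= -sum_nat_const.
by apply: leq_sum => y hy; rewrite sum1dep_card leqNgt; exact: hsmall.
Qed.

Record representation (T : finType) (o : NAops T) (m : nat) (D : Type) (oD : CAops D)
    (g : T -> D) : Prop := Representation {
  rep_CA : is_CA m oD;
  rep_nontrivial : ca_un oD <> ca_zr oD;
  rep_two_dim : forall a, two_dim oD m (g a);
  rep_join : forall a b, g (na_jn o a b) = ca_jn oD (g a) (g b);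
  rep_meet : forall a b, g (na_mt o a b) = ca_mt oD (g a) (g b);
  rep_zero : g (na_zr o) = ca_zr oD;
  rep_top : g (na_un o) = ca_un oD;
  rep_comp : forall y z, ba_le (ca_jn oD)
    (ca_c oD 2 (ca_mt oD (ca_s oD 1 2 (g y)) (ca_s oD 0 2 (g z)))) (g (na_comp o y z));
  rep_atom : forall b, atom_in o [set: T] b -> ca_c oD 1 (g b) = ca_un oD
}.

Section Network.
Variables (T : finType) (o : NAops T) (E : {set T}) (p : nat) (u : T) (SU : {set T}).
Local Notation JA := (na_jn o). Local Notation MA := (na_mt o).
Local Notation CA := (na_cp o). Local Notation ZA := (na_zr o).
Local Notation UA := (na_un o). Local Notation comp := (na_comp o).
Local Notation I := (na_id o).
Local Notation leA := (ba_le JA).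
Local Notation atE := [set x | atom_in o E x].
Hypothesis HNA : is_NA o.
Hypothesis Hsym : symmetric_in o [set: T].
Hypothesis HidA : atom_in o [set: T] I.
Hypothesis HE : subalgebra o E.
Hypothesis HidE : atom_in o E I.
Hypothesis Hcard : #|atE| = p.
Hypothesis Hp : 3 < p.
Hypothesis Hno1 : forall v, atom_in o E v -> na_le o v (na_div o) -> MA (comp v v) v = ZA.
Hypothesis Hu : atom_in o E u.
Hypothesis Hudiv : na_le o u (na_div o).
Hypothesis HSU : forall a, a \in SU -> atom_in o [set: T] a /\ leA a u.
Hypothesis HSUc : p ^ (p - 1) <= #|SU|.

Variables (D : Type) (oD : CAops D).
Local Notation JD := (ca_jn oD). Local Notation MD := (ca_mt oD).
Local Notation CD := (ca_cp oD). Local Notation ZD := (ca_zr oD).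
Local Notation UD := (ca_un oD). Local Notation c := (ca_c oD).
Local Notation leD := (ba_le JD).
Variable g : T -> D.
Hypothesis Hrep : representation o p.+1 oD g.
Let HC := rep_CA Hrep.
Let g_nontrivial := rep_nontrivial Hrep.
Let g_two_dim := rep_two_dim Hrep.
Let gJ := rep_join Hrep.
Let gM := rep_meet Hrep.
Let g0 := rep_zero Hrep.
Let g1 := rep_top Hrep.
Let g_comp := rep_comp Hrep.
Let g_atom := rep_atom Hrep.
Let HBA : is_BA JA MA CA ZA UA := HNA.1.
Let HBD : is_BA JD MD CD ZD UD := HC.1.
Let hm : 4 < p.+1. Proof. exact: leq_trans Hp _. Qed.
Let hp2 : 2 < p. Proof. exact: ltnW Hp. Qed.
Let hp1 : 1 < p. Proof. exact: ltnW hp2. Qed.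
Let hp0 : 0 < p. Proof. exact: ltnW hp1. Qed.

Definition gedge a i j := edge oD (g a) i j.

(* Cylindrifying along j, [composes_all] pushes w below the edge (i, k) of x . (y ; z). *)
Lemma triangle_meet_neq0 x y z i j k w : i < p.+1 -> j < p.+1 -> k < p.+1 ->
  i != j -> i != k -> j != k -> j != 0 -> k != 0 -> w <> ZD ->
  leD w (gedge y i j) -> leD w (gedge z j k) -> leD w (gedge x i k) -> MA x (comp y z) <> ZA.
Proof.
move=> hi hj hk hij hik hjk hj0 hk0 hw h1 h2 h3 hxyz.
have hyz : composes oD (g y) (g z) (g (comp y z)) i j k by apply: (composes_all HC hm) => //; exact: g_comp.
set P := MD (MD (gedge y i j) (gedge z j k)) (gedge x i k).
have hP : leD w P by apply: (lexI HBD) => //; apply: (lexI HBD).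
have hcP : c j P = MD (c j (MD (gedge y i j) (gedge z j k))) (gedge x i k).
  by apply: (cylIr HC) => //; apply: (cyl_edge HC hm); rewrite // eq_sym.
have : leD (c j P) (gedge (MA (comp y z) x) i k).
  by rewrite hcP /gedge gM (edgeI HC hm) //; apply: (leI2 HBD) => //; exact: (lexx HBD).
rewrite (meetC HBA) hxyz /gedge g0 (edge0 HC hm) => /(lex0 HBD) hc.
apply: hw; apply: (lex0 HBD); apply: (le_trans HBD hP).
by rewrite -hc; apply: (le_cyl HC).
Qed.

Fixpoint fan (cs : seq T) (st l : nat) : D :=
  if cs is e :: cs' then MD (gedge e st l) (fan cs' st.+1 l) else UD.

Lemma fan_le_edge cs st l i : i < size cs -> leD (fan cs st l) (gedge (nth ZA cs i) (st + i) l).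
Proof.
elim: cs st i => [// | e cs IH] st [| i] /= hi; first by rewrite addn0; exact: (leIl HBD).
by apply: (le_trans HBD (leIr HBD _ _)); rewrite -addSnnS; exact: IH.
Qed.

Lemma cyl_fan cs st l q : 0 < st -> st + size cs <= l -> l < p.+1 ->
  st + size cs <= q -> q < p.+1 -> q != l -> c q (fan cs st l) = fan cs st l.
Proof.
elim: cs st => [| e cs IH] st /= hst hl hlm hq hqm hql; first exact: (cyl1 HC).
rewrite -addSnnS in hl hq.
apply: (cyl_fixI HC) => //; last exact: IH.
by apply: (cyl_edge HC hm) => //; lia.
Qed.

Lemma subst_fan cs st l q : 0 < st -> st + size cs <= l -> l < p.+1 ->
  st + size cs <= q -> q < p.+1 -> q != l -> subst oD l q (fan cs st l) = fan cs st q.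
Proof.
elim: cs st => [| e cs IH] st /= hst hl hlm hq hqm hql; first exact: (subst1 HC).
rewrite -addSnnS in hl hq.
rewrite (substI HC) // IH // /gedge (subst_edger HC hm) //; lia.
Qed.

Lemma fan_rcons cs e st l : fan (rcons cs e) st l = MD (fan cs st l) (gedge e (st + size cs) l).
Proof.
elim: cs st => [| e' cs IH] st /=; first by rewrite addn0 (meetx1 HBD) (meet1x HBD).
by rewrite IH addSnnS (meetA HBD).
Qed.

Lemma join_gedge_atoms q l : q < p.+1 -> l < p.+1 ->
  foldr JD ZD (map (fun e => gedge e q l) (enum atE)) = UD.
Proof.
move=> hq hl.
have gedge_foldr r : foldr JD ZD (map (fun e => gedge e q l) r) = gedge (foldr JA ZA r) q l.
  elim: r => [| e r IH] /=; first by rewrite /gedge g0 (edge0 HC hm).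
  by rewrite IH /gedge gJ (edgeU HC hm).
by rewrite gedge_foldr (join_atoms HNA HE) /gedge g1 (edge1 HC hm).
Qed.

Lemma exists_colour w y q : q < p.+1 -> w <> ZD -> leD w (c p y) ->
  exists2 e, e \in atE & MD w (c p (MD y (gedge e q p))) <> ZD.
Proof.
move=> hq hw /(meet_idPl HBD) h.
rewrite -[y](meetx1 HBD) -(join_gedge_atoms hq (ltnSn p)) (meet_cyl_foldr HC) // in h.
have [e he hne] : exists2 e, e \in enum atE & MD w (c p (MD y (gedge e q p))) <> ZD.
  by apply: (foldr_join_neq0 HBD); rewrite h.
by exists e; rewrite // mem_enum in he.
Qed.

Lemma colour_edges q (Y : T -> D) (bs : seq T) dd : q < p.+1 -> dd <> ZD ->
  (forall b, b \in bs -> leD dd (c p (Y b))) ->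
  exists dd' (col : T -> T), [/\ dd' <> ZD, leD dd' dd &
    forall b, b \in bs -> col b \in atE /\ leD dd' (c p (MD (Y b) (gedge (col b) q p)))].
Proof.
move=> hq; elim: bs dd => [| b bs IH] dd hdd hb.
  by exists dd, id; split => //; exact: (lexx HBD).
have [e he hne] := exists_colour hq hdd (hb b (mem_head _ _)).
set dd1 := MD dd (c p (MD (Y b) (gedge e q p))).
have [dd' [col' [h1 h2 h3]]] : exists dd' (col : T -> T), [/\ dd' <> ZD, leD dd' dd1 &
    forall b, b \in bs -> col b \in atE /\ leD dd' (c p (MD (Y b) (gedge (col b) q p)))].
  by apply: IH => // b' hb'; apply: (le_trans HBD (leIl HBD _ _)); apply: hb; rewrite inE hb' orbT.
exists dd', (fun x => if x == b then e else col' x); split => //.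
  exact: (le_trans HBD h2 (leIl HBD _ _)).
move=> b' hb'; case: eqVneq => [-> | hneb]; first by split => //; exact: (le_trans HBD h2 (leIr HBD _ _)).
by apply: h3; move: hb'; rewrite inE (negbTE hneb).
Qed.

Lemma u_neq_id : u <> I.
Proof.
move=> e; apply: (atom_neq0 HidA).
have h : leA I (CA I) by rewrite -{1}e; apply/na_leP.
by move/(meet_idPl HBA): h; rewrite (meetxC HBA) => <-.
Qed.

(* The E-atoms that can label the edges (i, p), 0 < i < p, of a network. *)
Definition colours := atE :\: [set I; u].

Lemma card_colours : #|colours| = p - 2.
Proof.
have sub : [set I; u] \subset atE by apply/subsetP => x; rewrite !inE => /orP [] /eqP ->.
by rewrite cardsD (setIidPr sub) cards2 Hcard; case: eqVneq => // hIu; case: u_neq_id.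
Qed.

Definition net cs b l := MD (gedge b 0 l) (fan cs 1 l).

(* A network on the points 0, 1, ..., k, p: for every b in S, the labelling with b on the
   edge (0, p) and cs on the edges (1, p), ..., (k, p) is realised, up to cylindrification
   along p, above the single nonzero element dd. *)
Variant network k : Prop :=
  Network (dd : D) (cs : seq T) (S : {set T}) of dd <> ZD & size cs = k & uniq cs
    & {subset cs <= colours} & S \subset SU & p ^ (p - 1 - k) <= #|S|
    & (forall b, b \in S -> leD dd (c p (net cs b p))).

Lemma network0 : network 0.
Proof.
apply: (@Network _ UD [::] SU g_nontrivial) => //; rewrite ?subn0 //.
move=> b /HSU [hb _]; rewrite /net /= (meetx1 HBD) /gedge /edge subst_xx /subst.
have hp1' : 1 != p by rewrite neq_ltn hp1.
rewrite ifN // (cyl_cas_target HC) ?g_atom //; first exact: (lexx HBD).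
by apply: g_two_dim; rewrite ltnSn andbT ltnW.
Qed.

Lemma network_size k : network k -> k <= p - 2.
Proof.
case=> dd cs S _ <- huq hcs _ _ _; rewrite -card_colours cardE.
by apply: uniq_leq_size => // x /hcs; rewrite mem_enum.
Qed.

Section Step.
Variables (k : nat) (dd : D) (cs : seq T) (S : {set T}) (a : T).
Hypotheses (hdd : dd <> ZD) (hsz : size cs = k) (hcs : {subset cs <= colours}).
Hypotheses (hS : S \subset SU) (hnet : forall b, b \in S -> leD dd (c p (net cs b p))).
Hypotheses (haS : a \in S) (hk : k.+1 < p).

Let hkm : k.+1 < p.+1. Proof. exact: ltnW. Qed.
Let hs1 : 1 + size cs <= p. Proof. by rewrite hsz ltnW. Qed.
Let hs2 : 1 + size cs <= k.+1. Proof. by rewrite hsz. Qed.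

Lemma cyl_net l b q : l < p.+1 -> 1 + size cs <= l -> q < p.+1 -> 1 + size cs <= q -> q != l ->
  c q (net cs b l) = net cs b l.
Proof.
move=> hl hl' hq hq' hql; apply: (cyl_fixI HC) => //; last exact: cyl_fan.
by apply: (cyl_edge HC hm); rewrite // -?lt0n; lia.
Qed.

Lemma extend_network : exists dd' (col : T -> T), [/\ dd' <> ZD, leD dd' (net cs a k.+1) &
  forall b, b \in S :\ a -> col b \in atE /\ leD dd' (c p (MD (net cs b p) (gedge (col b) k.+1 p)))].
Proof.
have hkp : k.+1 != p by rewrite neq_ltn hk.
set d0 := c k.+1 dd.
have hd0 : d0 <> ZD by apply: (le_neq0 HBD (le_cyl HC dd hkm)).
have hd0b b : b \in S -> leD d0 (c p (net cs b p)).
  move=> hb; have e : c k.+1 (net cs b p) = net cs b p by apply: cyl_net.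
  by rewrite -e (cylC HC) //; apply: (cyl_mono HC) => //; exact: hnet.
have hX : c k.+1 (net cs a k.+1) = c p (net cs a p).
  have -> : net cs a k.+1 = subst oD p k.+1 (net cs a p).
    rewrite /net (substI HC) // subst_fan // /gedge (subst_edger HC hm) //; lia.
  by rewrite (cyl_subst_target HC) // ?cyl_net // eq_sym.
have hd1 : MD d0 (net cs a k.+1) <> ZD.
  by apply: (meet_neq0_le_cyl HC hkm) => //; [exact: (cylK HC) | rewrite hX; exact: hd0b].
have hd1b b : b \in enum (S :\ a) -> leD (MD d0 (net cs a k.+1)) (c p (net cs b p)).
  by rewrite mem_enum => /setD1P [_ hb]; exact: (le_trans HBD (leIl HBD _ _) (hd0b b hb)).
have [dd' [col [hdd' hle hcol]]] := colour_edges (Y := fun b => net cs b p) hkm hd1 hd1b.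
exists dd', col; split => //; first exact: (le_trans HBD hle (leIr HBD _ _)).
by move=> b hb; apply: hcol; rewrite mem_enum.
Qed.

Lemma colour_fresh b e w : b \in S :\ a -> e \in atE -> w <> ZD -> leD w (net cs a k.+1) ->
  leD w (c p (MD (net cs b p) (gedge e k.+1 p))) -> e \in colours :\: [set x in cs].
Proof.
move=> /setD1P [hba hbS] heE hw hwa hwb.
have hkp : p != k.+1 by rewrite neq_ltn hk orbT.
set W := MD (net cs a k.+1) (MD (net cs b p) (gedge e k.+1 p)).
have hW : W <> ZD.
  apply: (cyl_neq0 HC (i := p)) => //; apply: (le_neq0 HBD _ hw).
  by rewrite /W (cylIl HC) ?cyl_net //; exact: (lexI HBD).
have hWa : leD W (net cs a k.+1) := leIl HBD _ _.
have hWb : leD W (net cs b p) := le_trans HBD (leIr HBD _ _) (leIl HBD _ _).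
have hWe : leD W (gedge e k.+1 p) := le_trans HBD (leIr HBD _ _) (leIr HBD _ _).
have [hbA hbu] := HSU (subsetP hS b hbS).
have [haA hau] := HSU (subsetP hS a haS).
have tri0 x : leD W (gedge x 0 p) -> MA x (comp a e) <> ZA.
  move=> hx; apply: (triangle_meet_neq0 (i := 0) (j := k.+1) (k := p) (w := W)) => //;
    [by rewrite eq_sym -lt0n | by rewrite eq_sym | by rewrite -lt0n
    | exact: (le_trans HBD hWa (leIl HBD _ _))].
rewrite /colours !in_setD heE andbT !inE negb_or; apply/and3P; split; apply/negP.
- move=> hecs.
  have hi : index e cs < size cs by rewrite index_mem.
  have /setDP [heA] : e \in colours by exact: hcs.
  rewrite !inE negb_or => /andP [/eqP heI _].
  have hWcs b' l : leD W (net cs b' l) -> leD W (gedge e (1 + index e cs) l).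
    move=> h; apply: (le_trans HBD h); apply: (le_trans HBD (leIr HBD _ _)).
    by rewrite -{1}(nth_index ZA hecs); exact: fan_le_edge.
  apply: (triangle_meet_neq0 (x := e) (y := e) (z := e) (i := 1 + index e cs) (j := k.+1)
    (k := p) (w := W)) => //; try (clear -hi hsz hk; lia); [exact: hWcs hWa | exact: hWcs hWb |].
  rewrite inE in heA.
  by rewrite (meetC HBA) Hno1 //; apply/na_leP; exact: (atom_le_div HNA HE HidE).
- move=> /eqP heI; apply: (tri0 b (le_trans HBD hWb (leIl HBD _ _))).
  by rewrite heI (comp1 HNA) (meetC HBA) (atom_meet0 HNA haA hbA) // => hab; rewrite hab eqxx in hba.
- move=> /eqP heu; apply: (tri0 b (le_trans HBD hWb (leIl HBD _ _))).
  apply: (lex0 HBA); rewrite -(Hno1 Hu Hudiv) (meetC HBA (comp u u)) heu.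
  by apply: (leI2 HBA) => //; apply: (comp_mono HNA Hsym) => //; exact: (lexx HBA).
Qed.
End Step.

Lemma network_step k : network k -> network k.+1.
Proof.
move=> nw; have hk : k.+1 < p by have := network_size nw; clear -Hp; lia.
case: nw => dd cs S hdd hsz huq hcs hS hcard hnet.
set P := p ^ (p - 1 - k.+1).
have eP : p ^ (p - 1 - k) = p * P by rewrite /P -expnS; congr (_ ^ _); clear -hk; lia.
have hP0 : 0 < P by rewrite expn_gt0 hp0.
have [a haS] : exists a, a \in S.
  by apply/card_gt0P; apply: leq_trans hcard; rewrite eP muln_gt0 hp0.
have [dd' [col [hdd' hle hcol]]] := extend_network hdd hsz hS hnet haS hk.
set B := colours :\: [set x in cs].
have hfresh b : b \in S :\ a -> col b \in B.
  by move=> hb; have [heE hle'] := hcol b hb; exact: (colour_fresh hsz hcs hS haS hk hb heE hdd' hle).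
have hcardB : #|B| = p - 2 - k.
  have sub : [set x in cs] \subset colours by apply/subsetP => x; rewrite inE; exact: hcs.
  by rewrite cardsD (setIidPr sub) card_colours cardsE (card_uniqP huq) hsz.
have [e heB hfib] : exists2 e, e \in B & P.-1 < #|[set b in S :\ a | col b == e]|.
  apply: exists_large_fibre hfresh _.
  have := cardsD1 a S; rewrite haS hcardB; move: hcard; rewrite eP.
  by clear -hP0 Hp; nia.
rewrite prednK // in hfib.
move: heB; rewrite /B in_setD inE => /andP [hecs heC].
apply: (@Network _ dd' (rcons cs e) [set b in S :\ a | col b == e]) => //.
- by rewrite size_rcons hsz.
- by rewrite rcons_uniq hecs huq.
- by move=> x; rewrite mem_rcons inE => /orP [/eqP -> | /hcs].
- by apply/subsetP => x; rewrite inE => /andP [/setD1P [_ hx] _]; exact: (subsetP hS).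
- move=> b; rewrite inE => /andP [hb /eqP <-]; have [_ h] := hcol b hb.
  by rewrite /net fan_rcons hsz add1n (meetA HBD).
Qed.

Lemma no_network_representation : False.
Proof.
have nw k : network k by elim: k => [| k IH]; [exact: network0 | exact: network_step].
by have := network_size (nw (p - 1)); clear -Hp; lia.
Qed.
End Network.

Section Representations.
Variables (T : finType) (o : NAops T).
Local Notation JA := (na_jn o). Local Notation MA := (na_mt o).
Local Notation CA := (na_cp o). Local Notation ZA := (na_zr o).
Local Notation UA := (na_un o). Local Notation comp := (na_comp o).
Local Notation I := (na_id o).
Local Notation leA := (ba_le JA).
Hypothesis HNA : is_NA o.
Hypothesis Hsym : symmetric_in o [set: T].
Hypothesis HidA : atom_in o [set: T] I.
Let HBA : is_BA JA MA CA ZA UA := HNA.1.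

Lemma le_bigjoin (S : {set T}) x : x \in S -> leA x (\big[JA/ZA]_(a in S) a).
Proof.
move=> hx; suff : forall r, x \in r -> leA x (\big[JA/ZA]_(a <- r | a \in S) a).
  by apply; rewrite mem_index_enum.
elim=> [// | h t IH] hr; rewrite big_cons.
have [hh | hh] := boolP (h \in S); last first.
  by apply: IH; move: hr; rewrite inE => /orP [/eqP e | //]; move: hh; rewrite -e hx.
case: (eqVneq x h) => [-> | hne]; first exact: (leUl HBA).
apply: (le_trans HBA (IH _)); last exact: (leUr HBA).
by move: hr; rewrite inE (negbTE hne).
Qed.

Lemma top_neq0 : UA <> ZA.
Proof. by move=> e; apply: (atom_neq0 HidA); rewrite -(meetx1 HBA I) e (meetx0 HBA). Qed.

Lemma no_representation (E : {set T}) (p : nat) (D : Type) (oD : CAops D) (g : T -> D) :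
  subalgebra o E -> atom_in o E I -> #|[set x | atom_in o E x]| = p -> 3 < p ->
  (forall u, atom_in o E u -> na_le o u (na_div o) -> MA (comp u u) u = ZA) ->
  (exists u, [/\ atom_in o E u, na_le o u (na_div o) &
     exists S : {set T}, [/\ S \subset [set a | atom_in o [set: T] a],
        \big[JA / ZA]_(a in S) a = u & p ^ (p - 1) <= #|S|]]) ->
  ~ representation o p.+1 oD g.
Proof.
move=> HE HidE Hcard Hp Hno1 [u [Hu Hudiv [S [hsub hbig hcS]]]] Hrep.
have HSU a : a \in S -> atom_in o [set: T] a /\ leA a u.
  by move=> ha; split; [have := subsetP hsub a ha; rewrite inE | rewrite -hbig; exact: le_bigjoin].
exact: (no_network_representation HNA Hsym HidA HE HidE Hcard Hp Hno1 Hu Hudiv HSU hcS Hrep).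
Qed.

Lemma id_le_comp1 b : b <> ZA -> leA I (comp b UA).
Proof.
move=> hb; apply: (le_trans HBA (id_le_comp_self HNA Hsym HidA hb)).
by apply: (comp_mono HNA Hsym); [exact: (lexx HBA) | exact: (lex1 HBA)].
Qed.

Lemma SRaCA_representation m : 2 < m -> in_SRaCA m o ->
  exists (D : Type) (oD : CAops D) (g : T -> D), representation o m oD g.
Proof.
move=> hm [D [oD [HC [Dsub [[_ [_ [_ [_ [_ [_ [_ Dcl]]]]]]] [h [hinj [hra hhom]]]]]]]].
have [hJ [hM [_ [hZ [hU [hI [_ hcomp]]]]]]] := hhom.
have HBD := HC.1; have hm1 : 1 < m := ltnW hm; have hm0 : 0 < m := ltnW hm1.
exists D, oD, h; split => //.
- by move=> e; apply: top_neq0; apply: hinj; rewrite hU hZ.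
- move=> a k /andP [hk2 hkm]; have [hDa hc2] := hra a.
  case: (eqVneq k 2) => [-> // | hk]; apply: Dcl => //.
  by rewrite hkm andbT ltn_neqAle eq_sym hk.
- by move=> y z; rewrite hcomp; exact: (lexx HBD).
- move=> b hb.
  have e1 : h (comp b UA) = ca_c oD 1 (h b).
    rewrite hcomp /ra_comp hU (cas1 HC) // (meetx1 HBD) (cyl_cas_target HC) //.
    by case: (hra b).
  have hle : ba_le (ca_jn oD) (ca_d oD 0 1) (ca_c oD 1 (h b)).
    by rewrite -hI -e1 /ba_le -hJ (id_le_comp1 (atom_neq0 hb)).
  apply: (le_anti HBD); first exact: (lex1 HBD).
  by have := cyl_mono HC hm1 hle; rewrite (cyl_diagr HC) // (cylK HC).
Qed.
End Representations.

Section BasicMatrices.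
Variables (T : finType) (o : NAops T).
Local Notation JA := (na_jn o). Local Notation MA := (na_mt o).
Local Notation CA := (na_cp o). Local Notation ZA := (na_zr o).
Local Notation UA := (na_un o). Local Notation comp := (na_comp o).
Local Notation I := (na_id o).
Local Notation leA := (ba_le JA).
Hypothesis HNA : is_NA o.
Hypothesis Hsym : symmetric_in o [set: T].
Hypothesis HidA : atom_in o [set: T] I.
Let HBA : is_BA JA MA CA ZA UA := HNA.1.

Definition i0 : 'I_3 := @Ordinal 3 0 isT.
Definition i1 : 'I_3 := @Ordinal 3 1 isT.
Definition i2 : 'I_3 := @Ordinal 3 2 isT.
Lemma inord0 : inord 0 = i0. Proof. by apply: val_inj; rewrite /= inordK. Qed.
Lemma inord1 : inord 1 = i1. Proof. by apply: val_inj; rewrite /= inordK. Qed.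
Lemma inord2 : inord 2 = i2. Proof. by apply: val_inj; rewrite /= inordK. Qed.

Definition embed a : {set B3 o} := [set mu : B3 o | na_le o (val mu (inord 0, inord 1)) a].

Lemma basic_entry (mu : B3 o) (i j l : 'I_3) :
  [/\ atom_in o [set: T] (val mu (i, j)), leA (val mu (i, i)) I,
      val mu (i, j) = val mu (j, i) & leA (val mu (i, j)) (comp (val mu (i, l)) (val mu (l, j)))].
Proof.
have := valP mu; move/forallP/(_ i)/forallP/(_ j)/forallP/(_ l)/and4P => [h1 /na_leP h2 /eqP h3 /na_leP h4].
by split => //; rewrite -h3 (conv_id Hsym).
Qed.

Lemma entry_id (mu : B3 o) (i j : 'I_3) : leA (val mu (i, j)) I -> val mu (i, j) = I.
Proof. by move=> h; have [a _ _ _] := basic_entry mu i j i; exact: (atom_le_eq a HidA). Qed.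

Lemma Ca_cylP (i : nat) (X : {set B3 o}) (mu : B3 o) : reflect
  (exists2 mu', mu' \in X & forall l k : 'I_3, (l : nat) != i -> (k : nat) != i ->
     val mu (l, k) = val mu' (l, k))
  (mu \in Ca_cyl i X).
Proof.
rewrite inE; apply: (iffP existsP) => [[mu' /andP [h1 /forallP h2]] | [mu' h1 h2]].
  exists mu' => // l k hl hk.
  by move: (h2 l) => /forallP /(_ k) /implyP; rewrite hl hk => /(_ isT) /eqP.
exists mu'; rewrite h1 /=; apply/forallP => l; apply/forallP => k.
by apply/implyP => /andP [hl hk]; apply/eqP; exact: h2.
Qed.

(* The basic matrix with b on the entries (0, 1), (1, 0), (1, 2), (2, 1) and I elsewhere. *)
Definition edge_mat (b : T) : mat T :=
  [ffun ij : 'I_3 * 'I_3 => if (ij.1 == i1) (+) (ij.2 == i1) then b else I].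

Lemma basic_edge_mat b : atom_in o [set: T] b -> basic3 o (edge_mat b).
Proof.
move=> hb.
have t1 : na_le o I (comp I I) by apply/na_leP; rewrite (comp1 HNA); exact: (lexx HBA).
have t2 : na_le o b (comp b I) by apply/na_leP; rewrite (comp1 HNA); exact: (lexx HBA).
have t3 : na_le o b (comp I b) by apply/na_leP; rewrite (comp1l HNA Hsym); exact: (lexx HBA).
have t4 : na_le o I (comp b b) by apply/na_leP; exact: (id_le_comp_self HNA Hsym HidA (atom_neq0 hb)).
have t5 : na_le o I I by apply/na_leP; exact: (lexx HBA).
apply/forallP => i; apply/forallP => j; apply/forallP => l; rewrite !ffunE /=.
by case: (i == i1); case: (j == i1); case: (l == i1) => /=; apply/and4P; split => //;
  rewrite (conv_id Hsym).
Qed.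

Lemma embedU a b : embed (JA a b) = embed a :|: embed b.
Proof.
apply/setP => mu; rewrite !inE.
have [hat _ _ _] := basic_entry mu (inord 0) (inord 1) (inord 0).
apply/idP/orP; first by move/na_leP/(atom_le_join HNA hat) => [] /na_leP; [left | right].
case=> /na_leP hle; apply/na_leP; apply: (le_trans HBA hle); [exact: (leUl HBA) | exact: (leUr HBA)].
Qed.

Lemma embedI a b : embed (MA a b) = embed a :&: embed b.
Proof.
apply/setP => mu; rewrite !inE; apply/idP/andP.
  by move/na_leP => hle; split; apply/na_leP; apply: (le_trans HBA hle); [exact: (leIl HBA) | exact: (leIr HBA)].
by case=> /na_leP h3 /na_leP h4; apply/na_leP; exact: (lexI HBA).
Qed.

Lemma embed0 : embed ZA = set0.
Proof.
apply/setP => mu; rewrite !inE.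
have [hat _ _ _] := basic_entry mu (inord 0) (inord 1) (inord 0).
by apply/negP => /na_leP /(lex0 HBA); exact: (atom_neq0 hat).
Qed.

Lemma embed1 : embed UA = setT.
Proof. by apply/setP => mu; rewrite !inE; apply/na_leP; exact: (lex1 HBA). Qed.

Lemma setT_B3_neq0 : [set: B3 o] <> set0.
Proof.
by move/setP/(_ (exist _ (edge_mat I) (basic_edge_mat HidA))); rewrite !inE.
Qed.

Lemma Ca_cyl2_embed a : Ca_cyl 2 (embed a) = embed a.
Proof.
apply/setP => mu; apply/idP/idP; last by move=> hmu; apply/Ca_cylP; exists mu.
by case/Ca_cylP => mu' hmu' hag; move: hmu'; rewrite !inE inord0 inord1 hag.
Qed.

Lemma embed_comp y z :
  Ca_cyl 2 (Ca_cyl 1 (Ca_diag o 1 2 :&: embed y) :&: Ca_cyl 0 (Ca_diag o 0 2 :&: embed z))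
  \subset embed (comp y z).
Proof.
apply/subsetP => mu /Ca_cylP [nu /setIP [/Ca_cylP [nu' hnu' ag'] /Ca_cylP [nu'' hnu'' ag'']] ag].
move: hnu' hnu'' => /setIP [hd12 hy] /setIP [hd02 hz].
rewrite !inE !inord0 !inord1 !inord2 in hd12 hy hd02 hz *.
move: hd12 hy hd02 hz => /na_leP hd12 /na_leP hy /na_leP hd02 /na_leP hz.
apply/na_leP; rewrite ag //.
have [_ _ _ tri] := basic_entry nu i0 i1 i2.
apply: (le_trans HBA tri); apply: (comp_mono HNA Hsym).
- have [_ _ _ tri'] := basic_entry nu' i0 i2 i1.
  by rewrite ag' //; apply: (le_trans HBA tri'); rewrite (entry_id hd12) (comp1 HNA).
- have [_ _ sym' _] := basic_entry nu'' i0 i2 i0.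
  have [_ _ _ tri''] := basic_entry nu'' i2 i1 i0.
  rewrite ag'' //; apply: (le_trans HBA tri'').
  by rewrite -sym' (entry_id hd02) (comp1l HNA Hsym).
Qed.

Lemma embed_atom b : atom_in o [set: T] b -> Ca_diag o 0 2 \subset Ca_cyl 1 (embed b).
Proof.
move=> hb; apply/subsetP => mu; rewrite inE inord0 inord2 => /na_leP hd.
apply/Ca_cylP; exists (exist _ (edge_mat b) (basic_edge_mat hb)).
  by rewrite inE inord0 inord1 /= ffunE /=; apply/na_leP; exact: (lexx HBA).
have not1 (x : 'I_3) : (x : nat) != 1 -> x = i0 \/ x = i2.
  by case: x => [[| [| [| n]]] hx] // _; [left | right]; apply: val_inj.
move=> l k /not1 hl /not1 hk /=; rewrite ffunE /=.
case: hl => ->; case: hk => -> /=; apply: entry_id => //.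
- by have [_ t _ _] := basic_entry mu i0 i0 i0.
- by have [_ _ t _] := basic_entry mu i2 i0 i0; rewrite t.
- by have [_ t _ _] := basic_entry mu i2 i2 i2.
Qed.

Lemma SNrCaB3_representation m : 2 < m -> in_SNrCA 3 m (CaB3 o) ->
  exists (D : Type) (oD : CAops D) (g : T -> D), representation o m oD g.
Proof.
move=> hm [D [oD [HC [h [hinj [hc [hJ [hM [_ [hZ [hU [hcyl hdiag]]]]]]]]]]]].
have HBD := HC.1; have hm1 : 1 < m := ltnW hm; have hm0 : 0 < m := ltnW hm1.
have hmono (X Y : {set B3 o}) : X \subset Y -> ba_le (ca_jn oD) (h X) (h Y).
  by move=> hXY; rewrite /ba_le -hJ /= (setUidPr hXY).
have hc2 a : ca_c oD 2 (h (embed a)) = h (embed a) by rewrite -(hcyl 2) //= Ca_cyl2_embed.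
exists D, oD, (fun a => h (embed a)); split.
- exact: HC.
- by move=> e; apply: setT_B3_neq0; apply: hinj; rewrite hU hZ.
- move=> a k /andP [hk2 hkm]; case: (eqVneq k 2) => [-> // | hk].
  by apply: hc; rewrite hkm andbT ltn_neqAle eq_sym hk.
- by move=> a b; rewrite -hJ embedU.
- by move=> a b; rewrite -hM embedI.
- by rewrite -hZ embed0.
- by rewrite -hU embed1.
- move=> y z; rewrite /ca_s -!hdiag // -!hM -!hcyl // -hM -hcyl //.
  exact/hmono/embed_comp.
- move=> b hb.
  have hle : ba_le (ca_jn oD) (ca_d oD 0 2) (ca_c oD 1 (h (embed b))).
    by rewrite -hdiag // -hcyl //; exact/hmono/embed_atom.
  apply: (le_anti HBD); first exact: (lex1 HBD).
  by have := cyl_mono HC hm hle; rewrite (cyl_diagr HC) // (cylC HC) // hc2.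
Qed.
End BasicMatrices.

Theorem theorem5 (T : finType) (o : NAops T) (E : {set T}) (p : nat) :
  is_NA o ->
  subalgebra o E ->
  (* E finite (automatic, T is finite) and symmetric, 1' an atom of E, p > 3 atoms *)
  symmetric_in o E ->
  atom_in o E (na_id o) ->
  #|[set x | atom_in o E x]| = p ->
  3 < p ->
  (* E has no 1-cycles *)
  (forall u, atom_in o E u -> na_le o u (na_div o) ->
     na_mt o (na_comp o u u) u = na_zr o) ->
  (* A finite (T is a finType) and symmetric, 1' an atom of A *)
  symmetric_in o [set: T] ->
  atom_in o [set: T] (na_id o) ->
  (* some diversity atom of E is the join of at least p^(p-1) atoms of A *)
  (exists u, [/\ atom_in o E u, na_le o u (na_div o) &
     exists S : {set T}, [/\ S \subset [set a | atom_in o [set: T] a],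
        \big[na_jn o / na_zr o]_(a in S) a = u & p ^ (p - 1) <= #|S|]]) ->
  ~ in_SRaCA p.+1 o /\ ~ in_SNrCA 3 p.+1 (CaB3 o).
Proof.
move=> HNA HE _ HidE Hcard Hp Hno1 Hsym HidA Hu.
have hp : 2 < p.+1 by rewrite ltnS; exact: ltnW (ltnW Hp).
have no_rep := no_representation HNA Hsym HidA HE HidE Hcard Hp Hno1 Hu.
split.
- by move/(SRaCA_representation HNA Hsym HidA hp) => [D [oD [g /no_rep]]].
- by move/(SNrCaB3_representation HNA Hsym HidA hp) => [D [oD [g /no_rep]]].
Qed.
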